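(* Let $n\ge 2$ and let $(\mathcal V,[\cdot,\cdots,\cdot],S)$ be a generalized metric $n$-Leibniz algebra. Then for all $v_1,\dots,v_n\in\mathcal V$, $$\sum_{i=1}^{n-1}[v_i,v_1,\dots,v_{i-1},\widehat{v_i},v_{i+1},\dots,v_{n-1},v_n]=0,$$ where $\widehat{v_i}$ means that $v_i$ is omitted (so the $i$-th summand is the bracket whose first entry is $v_i$, followed by $v_1,\dots,v_{n-1}$ with $v_i$ removed, followed by $v_n$).
   Context: All vector spaces are finite-dimensional over $\mathbb R$. An $n$-Leibniz algebra is a vector space $\mathcal V$ with an $n$-linear map $[\cdot,\cdots,\cdot]:\mathcal V^{\times n}\to\mathcal V$ satisfying the fundamental identity $[u_1,\dots,u_{n-1},[v_1,\dots,v_n]]=\sum_{i=1}^n[v_1,\dots,v_{i-1},[u_1,\dots,u_{n-1},v_i],v_{i+1},\dots,v_n]$ for all $u_j,v_i\in\mathcal V$. For $S\in\mathrm{Sym}^{n-1}(\mathcal V^* )$ (a symmetric $(n-1)$-linear form on $\mathcal V$), $S$ is non-degenerate if the map $S^\sharp:\mathcal V\to\mathrm{Sym}^{n-2}(\mathcal V^* )$, $S^\sharp(u)(v_1,\dots,v_{n-2})=S(u,v_1,\dots,v_{n-2})$, is injective. A generalized metric $n$-Leibniz algebra is an $n$-Leibniz algebra $(\mathcal V,[\cdot,\cdots,\cdot])$ with a symmetric non-degenerate $S\in\mathrm{Sym}^{n-1}(\mathcal V^* )$ such that for all $u_1,\dots,u_{n-1},v_1,\dots,v_{n-1}\in\mathcal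 V$: (a) (unitarity) $\sum_{i=1}^{n-1}S(v_1,\dots,v_{i-1},[u_1,\dots,u_{n-1},v_i],v_{i+1},\dots,v_{n-1})=0$; (b) (symmetry) $S([u_1,\dots,u_{n-1},v_1],v_2,\dots,v_{n-1})=S([v_1,\dots,v_{n-1},u_1],u_2,\dots,u_{n-1})$. *)

From HB Require Import structures.
From mathcomp Require Import all_boot all_order all_algebra all_fingroup.
Set Implicit Arguments. Unset Strict Implicit. Unset Printing Implicit Defensive.
Import Order.TTheory GRing.Theory Num.Theory.
Local Open Scope ring_scope.

Section GML.
Variables (R : realFieldType) (V : vectType R) (n : nat).

Definition upd (k : nat) (f : {ffun 'I_k -> V}) (i : 'I_k) (x : V) :
  {ffun 'I_k -> V} := [ffun j => if j == i then x else f j].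

Definition multilinear (k : nat) (W : lmodType R) (F : {ffun 'I_k -> V} -> W) :=
  forall (f : {ffun 'I_k -> V}) (i : 'I_k) (a : R) (x y : V),
    F (upd f i (a *: x + y)) = a *: F (upd f i x) + F (upd f i y).

Variables (br : {ffun 'I_n -> V} -> V) (S : {ffun 'I_n.-1 -> V} -> R^o).

Definition br_of (g : nat -> V) : V := br [ffun j : 'I_n => g (val j)].
Definition S_of (g : nat -> V) : R := S [ffun j : 'I_n.-1 => g (val j)].

Definition brU (u : nat -> V) (x : V) : V :=
  br_of (fun j => if (j < n.-1)%N then u j else x).

Definition fundamental_identity :=
  forall (u v : nat -> V),
    brU u (br_of v) =
    \sum_(i < n) br_of (fun j => if j == val i then brU u (v (val i)) else v j).

Definition S_symmetric :=
  forall (f : {ffun 'I_n.-1 -> V}) (s : {perm 'I_n.-1}), S [ffun j => f (s j)] = S f.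

(* S^sharp : V -> Sym^{n-2}(dual V) is injective *)
Definition S_nondegenerate :=
  forall u u' : V,
    (forall w : nat -> V,
        S_of (fun j => if j == 0%N then u else w j) =
        S_of (fun j => if j == 0%N then u' else w j)) -> u = u'.

Definition S_unitarity :=
  forall (u v : nat -> V),
    \sum_(i < n.-1) S_of (fun j => if j == val i then brU u (v (val i)) else v j) = 0.

Definition S_symmetry :=
  forall (u v : nat -> V),
    S_of (fun j => if j == 0%N then brU u (v 0%N) else v j) =
    S_of (fun j => if j == 0%N then brU v (u 0%N) else u j).

Definition generalized_metric_nLeibniz : Prop :=
  multilinear br /\ fundamental_identity /\ multilinear S /\ S_symmetric /\
  S_nondegenerate /\ S_unitarity /\ S_symmetry.

End GML.

From HB Require Import structures.
From mathcomp Require Import all_boot all_order all_algebra all_fingroup.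
From mathcomp Require Import zify.
Import Order.TTheory GRing.Theory Num.Theory.
Local Open Scope ring_scope.
Set Implicit Arguments. Unset Strict Implicit.

(* Arguments are indexed from 0 as in the formal statement: for v_0, .., v_{n-1}
   let w_i = [v_i, v_0, .., ^v_i, .., v_{n-2}, v_{n-1}] and X = sum_i w_i.
   By non-degeneracy of S it suffices that S(X, x_1, .., x_{n-2}) = 0 for all
   x, and by linearity of S in its first slot this is sum_i S(w_i, x_1, ..).
   For each i, the symmetry axiom (b) applied with u = (v_i, v_0, .., ^v_i, ..,
   v_{n-2}) and y = (v_{n-1}, x_1, .., x_{n-2}) gives
   S(w_i, x_1, ..) = S([y, v_i], v_0, .., ^v_i, .., v_{n-2}), and since S is
   symmetric the bracket may be moved back into slot i:
   S(w_i, x_1, ..) = S(v_0, .., [y, v_i], .., v_{n-2}).  Summing over i, the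
   unitarity axiom (a) shows that the total vanishes. *)

Section ArgumentFamilies.
Variables (R : realFieldType) (V : vectType R).

Definition nupd (v : nat -> V) (i : nat) (x : V) : nat -> V :=
  fun j => if j == i then x else v j.

(* Index map that brings position i to the front, shifting 0, .., i-1 up. *)
Definition front_idx (i j : nat) : nat :=
  if j == 0%N then i else if (j <= i)%N then j.-1 else j.

Definition to_front (i : nat) (v : nat -> V) : nat -> V :=
  fun j => v (front_idx i j).

Lemma front_idx_inj (i : nat) : injective (front_idx i).
Proof. by move=> a b; rewrite /front_idx; repeat case: ifP => ?; lia. Qed.

Lemma front_idx_lt (k i j : nat) :
  (i < k)%N -> (j < k)%N -> (front_idx i j < k)%N.
Proof. by move=> ? ?; rewrite /front_idx; repeat case: ifP => ?; lia. Qed.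

Lemma to_front_nupd (i : nat) (v : nat -> V) (x : V) :
  to_front i (nupd v i x) =1 nupd (to_front i v) 0 x.
Proof.
move=> j; rewrite /to_front /nupd /front_idx.
case: j => [|j] /=; rewrite ?eqxx //.
by case: ltnP => ji; case: eqP => // ?; lia.
Qed.

Lemma ffun_nupd (k : nat) (i : 'I_k) (w : nat -> V) (x : V) :
  [ffun j : 'I_k => nupd w i x (val j)] = upd [ffun j : 'I_k => w (val j)] i x.
Proof. by apply/ffunP => j; rewrite !ffunE. Qed.

Section Multilinear.
Variables (k : nat) (W : lmodType R) (F : {ffun 'I_k -> V} -> W).
Hypothesis F_multilinear : multilinear F.

Lemma multilinear_nupd0 (w : nat -> V) (i : 'I_k) :
  F [ffun j => nupd w i 0 (val j)] = 0.
Proof.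
rewrite ffun_nupd; have := F_multilinear [ffun j => w (val j)] i (-1) 0 0.
by rewrite scaler0 addr0 scaleN1r addNr.
Qed.

Lemma multilinear_nupd_sum (w : nat -> V) (i : 'I_k) (N : nat) (x : 'I_N -> V) :
  F [ffun j => nupd w i (\sum_(l < N) x l) (val j)] =
  \sum_(l < N) F [ffun j => nupd w i (x l) (val j)].
Proof.
have F_add y z : F [ffun j => nupd w i (y + z) (val j)] =
                 F [ffun j => nupd w i y (val j)] + F [ffun j => nupd w i z (val j)].
  by rewrite !ffun_nupd -[y in y + z]scale1r F_multilinear scale1r.
exact: (big_morph (fun y => F [ffun j => nupd w i y (val j)]) F_add
                  (multilinear_nupd0 w i)).
Qed.

End Multilinear.

Lemma symmetric_to_front (k : nat) (T : Type) (F : {ffun 'I_k -> V} -> T)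
    (F_sym : forall (f : {ffun 'I_k -> V}) (s : {perm 'I_k}),
               F [ffun j => f (s j)] = F f)
    (i : nat) (v : nat -> V) :
  (i < k)%N -> F [ffun j : 'I_k => to_front i v (val j)] = F [ffun j => v (val j)].
Proof.
move=> ltik.
have front_lt (j : 'I_k) : (front_idx i j < k)%N by apply: front_idx_lt.
have s_inj : injective (fun j : 'I_k => Ordinal (front_lt j)).
  by move=> a b /(congr1 val) /front_idx_inj; exact: val_inj.
rewrite -[RHS](F_sym _ (perm s_inj)); congr F; apply/ffunP => j.
by rewrite !ffunE permE.
Qed.

End ArgumentFamilies.

Section GeneralizedMetric.
Variables (R : realFieldType) (V : vectType R) (n : nat).
Variables (br : {ffun 'I_n -> V} -> V) (S : {ffun 'I_n.-1 -> V} -> R^o).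

Lemma eq_S_of (f g : nat -> V) : f =1 g -> S_of S f = S_of S g.
Proof. by move=> fg; congr S; apply/ffunP => j; rewrite !ffunE. Qed.

Lemma S_of_nupd0 (hSl : multilinear S) (n1_gt0 : (0 < n.-1)%N) (w : nat -> V) :
  S_of S (nupd w 0 0) = 0.
Proof. exact: (multilinear_nupd0 hSl w (Ordinal n1_gt0)). Qed.

Lemma S_of_nupd0_sum (hSl : multilinear S) (n1_gt0 : (0 < n.-1)%N)
    (w : nat -> V) (N : nat) (x : 'I_N -> V) :
  S_of S (nupd w 0 (\sum_(l < N) x l)) = \sum_(l < N) S_of S (nupd w 0 (x l)).
Proof. exact: (multilinear_nupd_sum hSl w (Ordinal n1_gt0)). Qed.

Lemma summand_to_front (v : nat -> V) (i : nat) : (0 < n.-1)%N ->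
  br_of br (fun j => if j == 0%N then v i
                     else if (j < n.-1)%N then
                            (if (j <= i)%N then v j.-1 else v j)
                          else v n.-1) =
  brU br (to_front i v) (v n.-1).
Proof.
move=> n1_gt0; congr br; apply/ffunP => j; rewrite !ffunE /to_front /front_idx.
case: (val j) => [|j'] /=; first by rewrite n1_gt0.
by case: ifP => //; case: ifP.
Qed.

Lemma bracket_into_slot (hSs : S_symmetric S) (hsy : S_symmetry br S)
    (v w : nat -> V) (y : V) (i : nat) :
  (i < n.-1)%N ->
  S_of S (nupd w 0 (brU br (to_front i v) y)) =
  S_of S (nupd v i (brU br (nupd w 0 y) (v i))).
Proof.
move=> ltin.
transitivity (S_of S (fun j => if j == 0%N
                               then brU br (to_front i v) (nupd w 0 y 0)
                               else nupd w 0 y j)).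
  by apply: eq_S_of => -[|j].
rewrite hsy /S_of -[RHS](symmetric_to_front hSs _ ltin); congr S.
by apply/ffunP => j; rewrite !ffunE to_front_nupd.
Qed.

End GeneralizedMetric.

Theorem mainTheorem1 (R : realFieldType) (V : vectType R) (n : nat)
  (hn : (2 <= n)%N)
  (br : {ffun 'I_n -> V} -> V) (S : {ffun 'I_n.-1 -> V} -> R^o)
  (hGML : generalized_metric_nLeibniz br S) :
  forall v : nat -> V,
    \sum_(i < n.-1)
       br_of br (fun j => if j == 0%N then v (val i)
                          else if (j < n.-1)%N then
                                 (if (j <= val i)%N then v j.-1 else v j)
                               else v n.-1) = 0.
Proof.
case: hGML => [_ [_ [hSl [hSs [hnd [hun hsy]]]]]] v.
have n1_gt0 : (0 < n.-1)%N by rewrite -ltnS prednK // ltnW.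
under eq_bigr => i _ do rewrite summand_to_front //.
apply: hnd => w.
rewrite -[LHS]/(S_of S (nupd w 0 _)) -[RHS]/(S_of S (nupd w 0 0)).
rewrite S_of_nupd0_sum // S_of_nupd0 //.
apply: etrans (hun (nupd w 0 (v n.-1)) v); apply: eq_bigr => i _.
by rewrite (bracket_into_slot hSs hsy _ _ _ (ltn_ord i)).
Qed.
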